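(* There is a constant $c>0$ such that for all sufficiently large $n$ and every $\sigma\in[0,1]$, \[\min_x\left\{\frac{\binom{1-\sigma/2}{x-\sigma/2}_n+\binom{1-(1-\sigma)/2}{x}_n}{\binom{1/2}{x-\sigma/2}_n}\right\}\ \le\ 2^{n(1-h(1/4))}\,n^{c},\] where the minimum is over real $x$ with $0\le x-\sigma/2\le 1/2$ and $0\le x\le 1-(1-\sigma)/2$.
   Context: For reals $a\ge b\ge 0$, $\binom{a}{b}_n$ denotes the binomial coefficient $\binom{\lfloor an\rfloor}{\lfloor bn\rfloor}$. $h(x)=-x\log_2x-(1-x)\log_2(1-x)$ (with $h(0)=h(1)=0$) is the binary entropy function. *)

From Stdlib Require Import Reals Lra Lia ZArith.
Open Scope R_scope.

(* floor of a real, as a natural number (used only on nonnegative arguments) *)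
Definition nfloor (r : R) : nat := Z.to_nat (Int_part r).

(* binom(a,b)_n := binom(floor(a n), floor(b n)); Stdlib's real-valued C n k.
   In all uses below 0 <= b <= a, so floor(b n) <= floor(a n). *)
Definition binomn (a b : R) (n : nat) : R :=
  C (nfloor (a * INR n)) (nfloor (b * INR n)).

Definition log2 (x : R) : R := ln x / ln 2.

Definition h (x : R) : R :=
  if Req_EM_T x 0 then 0 else if Req_EM_T x 1 then 0
  else - x * log2 x - (1 - x) * log2 (1 - x).

From Pilot Require Import Defs.
From Stdlib Require Import Reals Lra Lia ZArith Factorial.
From Coquelicot Require Import Rcomplements Hierarchy Derive AutoDerive.
Open Scope R_scope.

(* Take [x = σ/2 + y] with [y = 1/4 + log2(3/2)/2 (σ - 1/2)].  Up to a factor [N + 1],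
   [binom N K] is [exp (N ln N - K ln K - (N - K) ln (N - K))], and this exponent is
   1-homogeneous, so after rounding both quotients are at most a polynomial in [n] times
   [exp (n rate σ)] resp. [exp (n rate (1 - σ))].  The function [rate] is concave on
   [0, 1] and stationary at [1/2], where it equals [(1 - h (1/4)) ln 2]. *)

Lemma exp_le_compat (x y : R) : x <= y -> exp x <= exp y.
Proof. intros [Hlt | ->]; [left; apply exp_increasing | right]; easy. Qed.

Lemma ln_le_sub_1 (z : R) : 0 < z -> ln z <= z - 1.
Proof. intros Hz. pose proof (exp_ineq1_le (ln z)) as H. rewrite exp_ln in H; lra. Qed.

Definition xlnx (z : R) : R := z * ln z.

Lemma xlnx_scale (lam z : R) : 0 < lam -> 0 <= z ->
  xlnx (lam * z) = lam * xlnx z + lam * z * ln lam.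
Proof.
  intros Hlam Hz. unfold xlnx. destruct (Req_dec z 0) as [-> | Hz0]; [ring |].
  rewrite ln_mult by lra. ring.
Qed.

Lemma xlnx_ge_m1 (z : R) : 0 <= z -> -1 <= xlnx z.
Proof.
  intros Hz. unfold xlnx. destruct (Req_dec z 0) as [-> | Hz0]; [lra |].
  assert (Hinv : ln (/ z) <= / z - 1) by (apply ln_le_sub_1, Rinv_0_lt_compat; lra).
  rewrite ln_Rinv in Hinv by lra.
  assert (Hmul : z * (/ z - 1) = 1 - z) by (field; lra).
  nra.
Qed.

Lemma xlnx_nonpos (z : R) : 0 <= z <= 1 -> xlnx z <= 0.
Proof.
  intros Hz. unfold xlnx. destruct (Req_dec z 0) as [-> | Hz0]; [lra |].
  assert (ln z <= 0) by (rewrite <- ln_1; apply ln_le; lra). nra.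
Qed.

Lemma xlnx_sub_bounds (x y M : R) : 0 <= x <= y -> y <= M -> 1 <= M ->
  -1 <= xlnx y - xlnx x <= (y - x) * (ln M + 1).
Proof.
  intros Hxy HyM HM. unfold xlnx.
  assert (HlnM : 0 <= ln M) by (rewrite <- ln_1; apply ln_le; lra).
  destruct (Req_dec y 0) as [Hy0 | Hy0].
  { replace x with 0 by lra. rewrite Hy0. lra. }
  assert (Hlny : ln y <= ln M) by (apply ln_le; lra).
  split.
  - destruct (Rle_dec 1 x) as [Hx1 | Hx1].
    + assert (0 <= ln x) by (rewrite <- ln_1; apply ln_le; lra).
      assert (ln x <= ln y) by (apply ln_le; lra). nra.
    + pose proof (xlnx_nonpos x ltac:(lra)). pose proof (xlnx_ge_m1 y ltac:(lra)).
      unfold xlnx in *. lra.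
  - (* [y ln y - x ln x = (y - x) ln y + x ln (y / x)] and [ln (y / x) <= y / x - 1] *)
    assert (Hlog : x * (ln y - ln x) <= y - x).
    { destruct (Req_dec x 0) as [-> | Hx0]; [lra |].
      assert (Hq : ln y - ln x = ln (y / x)).
      { unfold Rdiv. rewrite ln_mult, ln_Rinv; try lra. apply Rinv_0_lt_compat; lra. }
      assert (ln (y / x) <= y / x - 1) by (apply ln_le_sub_1, Rdiv_lt_0_compat; lra).
      replace (y - x) with (x * (y / x - 1)) by (field; lra).
      rewrite Hq. apply Rmult_le_compat_l; lra. }
    assert ((y - x) * ln y <= (y - x) * ln M) by (apply Rmult_le_compat_l; lra).
    nra.
Qed.

Lemma Rabs_xlnx_sub_le (x y M d : R) : 0 <= x <= M -> 0 <= y <= M -> 1 <= M ->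
  Rabs (x - y) <= d -> Rabs (xlnx x - xlnx y) <= d * (ln M + 1) + 1.
Proof.
  intros Hx Hy HM Hd. apply Rabs_le_between in Hd.
  assert (HlnM : 0 <= ln M) by (rewrite <- ln_1; apply ln_le; lra).
  apply Rabs_le. destruct (Rle_dec x y) as [Hxy | Hxy].
  - pose proof (xlnx_sub_bounds x y M ltac:(lra) ltac:(lra) HM). nra.
  - pose proof (xlnx_sub_bounds y x M ltac:(lra) ltac:(lra) HM). nra.
Qed.

Definition binom_exponent (u v : R) : R := xlnx u - xlnx v - xlnx (u - v).

Lemma binom_exponent_scale (lam u v : R) : 0 < lam -> 0 <= v <= u ->
  binom_exponent (lam * u) (lam * v) = lam * binom_exponent u v.
Proof.
  intros Hlam Huv. unfold binom_exponent.
  replace (lam * u - lam * v) with (lam * (u - v)) by ring.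
  rewrite !xlnx_scale by lra. ring.
Qed.

Lemma binom_exponent_approx (n a j u v : R) :
  1 <= n -> 0 <= v <= u -> u <= 1 -> 0 <= j <= a -> a <= n ->
  Rabs (a - n * u) <= 1 -> Rabs (j - n * v) <= 1 ->
  Rabs (binom_exponent a j - n * binom_exponent u v) <= 4 * ln n + 7.
Proof.
  intros Hn Huv Hu1 Hja Han Ha Hj.
  rewrite <- binom_exponent_scale by lra. unfold binom_exponent.
  assert (Hnu : n * v <= n * u <= n) by (split; nra).
  assert (Hdiff : Rabs (a - j - (n * u - n * v)) <= 2).
  { apply Rabs_le_between in Ha, Hj. apply Rabs_le. lra. }
  pose proof (Rabs_xlnx_sub_le a (n * u) n 1 ltac:(lra) ltac:(nra) Hn Ha) as Ea.
  pose proof (Rabs_xlnx_sub_le j (n * v) n 1 ltac:(lra) ltac:(nra) Hn Hj) as Ej.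
  pose proof (Rabs_xlnx_sub_le (a - j) (n * u - n * v) n 2 ltac:(lra) ltac:(nra) Hn Hdiff) as Ed.
  apply Rabs_le_between in Ea, Ej, Ed. apply Rabs_le. lra.
Qed.

Lemma C_pos (N k : nat) : 0 < C N k.
Proof.
  unfold C. pose proof (lt_0_INR _ (lt_O_fact N)).
  pose proof (lt_0_INR _ (lt_O_fact k)). pose proof (lt_0_INR _ (lt_O_fact (N - k))).
  apply Rdiv_lt_0_compat; [| apply Rmult_lt_0_compat]; lra.
Qed.

(* The terms of the binomial expansion of [N ^ N = (k + (N - k)) ^ N]; the largest is the [k]-th. *)
Definition binomial_term (N k i : nat) : R := C N i * INR k ^ i * INR (N - k) ^ (N - i).

Lemma binomial_term_nonneg (N k i : nat) : 0 <= binomial_term N k i.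
Proof.
  unfold binomial_term. pose proof (C_pos N i).
  pose proof (pow_le (INR k) i (pos_INR k)). pose proof (pow_le (INR (N - k)) (N - i) (pos_INR _)).
  apply Rmult_le_pos; [apply Rmult_le_pos |]; lra.
Qed.

Lemma sum_binomial_term (N k : nat) : (k <= N)%nat ->
  sum_f_R0 (binomial_term N k) N = INR N ^ N.
Proof.
  intros Hk. unfold binomial_term. rewrite <- binomial, <- plus_INR. f_equal. f_equal. lia.
Qed.

Lemma binomial_term_succ (N k i : nat) : (i < N)%nat ->
  binomial_term N k (S i) * (INR (S i) * INR (N - k)) =
  binomial_term N k i * (INR (N - i) * INR k).
Proof.
  intros Hi. unfold binomial_term.
  rewrite pascal_step3 by exact Hi.
  replace (N - i)%nat with (S (N - S i)) by lia.
  assert (0 < INR (S i)) by (apply lt_0_INR; lia).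
  simpl pow. field. lra.
Qed.

Lemma unimodal_le_mode (f : nat -> R) (k N : nat) : (k <= N)%nat ->
  (forall i, (i < k)%nat -> f i <= f (S i)) ->
  (forall i, (k <= i)%nat -> (i < N)%nat -> f (S i) <= f i) ->
  forall i, (i <= N)%nat -> f i <= f k.
Proof.
  intros HkN Hup Hdown i HiN.
  destruct (Nat.le_gt_cases i k) as [Hik | Hki].
  - replace i with (k - (k - i))%nat by lia.
    induction (k - i)%nat as [| d IH]; [rewrite Nat.sub_0_r; lra |].
    destruct (Nat.le_gt_cases k d).
    + replace (k - S d)%nat with (k - d)%nat by lia. exact IH.
    + apply Rle_trans with (2 := IH). replace (k - d)%nat with (S (k - S d)) by lia.
      apply Hup. lia.
  - replace i with (k + (i - k))%nat in * by lia. clear Hki.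
    induction (i - k)%nat as [| d IH]; [rewrite Nat.add_0_r; lra |].
    apply Rle_trans with (2 := IH ltac:(lia)). rewrite Nat.add_succ_r. apply Hdown; lia.
Qed.

Lemma binomial_term_le_mode (N k i : nat) : (k <= N)%nat -> (i <= N)%nat ->
  binomial_term N k i <= binomial_term N k k.
Proof.
  intros HkN HiN. apply (unimodal_le_mode _ k N); auto; intros j Hj.
  - destruct (Nat.eq_dec k N) as [-> | HkN'].
    + (* a factor [0 ^ (N - j)] kills the term *)
      assert (binomial_term N N j = 0) as ->.
      { unfold binomial_term. rewrite Nat.sub_diag, pow_i by lia. ring. }
      apply binomial_term_nonneg.
    + pose proof (binomial_term_succ N k j ltac:(lia)) as E.
      assert (0 < INR (S j) * INR (N - k)) by (apply Rmult_lt_0_compat; apply lt_0_INR; lia).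
      assert (INR (S j) * INR (N - k) <= INR (N - j) * INR k)
        by (rewrite <- !mult_INR; apply le_INR; nia).
      pose proof (binomial_term_nonneg N k j). nra.
  - intros HjN. pose proof (binomial_term_succ N k j HjN) as E.
    assert (0 < INR (S j) * INR (N - k)) by (apply Rmult_lt_0_compat; apply lt_0_INR; lia).
    assert (INR (N - j) * INR k <= INR (S j) * INR (N - k))
      by (rewrite <- !mult_INR; apply le_INR; nia).
    pose proof (binomial_term_nonneg N k j). pose proof (binomial_term_nonneg N k (S j)). nra.
Qed.

Lemma sum_f_R0_ge_term (f : nat -> R) (n i : nat) : (forall j, 0 <= f j) -> (i <= n)%nat ->
  f i <= sum_f_R0 f n.
Proof.
  intros Hf Hi. induction n as [| n IH].
  - replace i with 0%nat by lia. simpl. lra.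
  - simpl. destruct (Nat.eq_dec i (S n)) as [-> | Hne].
    + pose proof (cond_pos_sum f n Hf). lra.
    + pose proof (Hf (S n)). specialize (IH ltac:(lia)). lra.
Qed.

Lemma pow_INR_self (n : nat) : INR n ^ n = exp (xlnx (INR n)).
Proof.
  unfold xlnx. destruct n as [| n]; [simpl; rewrite Rmult_0_l, exp_0; reflexivity |].
  assert (0 < INR (S n)) by (apply lt_0_INR; lia).
  rewrite <- ln_pow, exp_ln by (try apply pow_lt; lra). reflexivity.
Qed.

Lemma exp_binom_exponent_mul (N k : nat) : (k <= N)%nat ->
  exp (binom_exponent (INR N) (INR k)) * binomial_term N k k = C N k * INR N ^ N.
Proof.
  intros Hk. unfold binomial_term, binom_exponent. rewrite <- minus_INR by exact Hk.
  rewrite !pow_INR_self. unfold Rminus. rewrite !exp_plus, !exp_Ropp.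
  pose proof (exp_pos (xlnx (INR k))). pose proof (exp_pos (xlnx (INR (N - k)))).
  field. lra.
Qed.

Lemma C_le_exp_binom_exponent (N k : nat) : (k <= N)%nat ->
  C N k <= exp (binom_exponent (INR N) (INR k)).
Proof.
  intros Hk. pose proof (exp_binom_exponent_mul N k Hk) as E.
  assert (Hmode : binomial_term N k k <= INR N ^ N).
  { rewrite <- (sum_binomial_term N k Hk).
    apply sum_f_R0_ge_term; [apply binomial_term_nonneg | exact Hk]. }
  assert (0 < INR N ^ N) by (rewrite pow_INR_self; apply exp_pos).
  pose proof (exp_pos (binom_exponent (INR N) (INR k))). nra.
Qed.

Lemma exp_binom_exponent_le_C (N k : nat) : (k <= N)%nat ->
  exp (binom_exponent (INR N) (INR k)) <= INR (S N) * C N k.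
Proof.
  intros Hk. pose proof (exp_binom_exponent_mul N k Hk) as E.
  assert (Hsum : INR N ^ N <= INR (S N) * binomial_term N k k).
  { rewrite <- (sum_binomial_term N k Hk), Rmult_comm, <- sum_cte.
    apply sum_Rle. intros i Hi. apply binomial_term_le_mode; assumption. }
  assert (0 < INR N ^ N) by (rewrite pow_INR_self; apply exp_pos).
  pose proof (exp_pos (binom_exponent (INR N) (INR k))). pose proof (pos_INR (S N)). nra.
Qed.

Lemma C_ratio_le (a j d j' : nat) : (j <= a)%nat -> (j' <= d)%nat ->
  C a j / C d j' <=
  INR (S d) * exp (binom_exponent (INR a) (INR j) - binom_exponent (INR d) (INR j')).
Proof.
  intros Hja Hjd.
  pose proof (C_le_exp_binom_exponent a j Hja) as Hup.
  pose proof (exp_binom_exponent_le_C d j' Hjd) as Hlow.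
  pose proof (C_pos d j'). unfold Rminus. rewrite exp_plus, exp_Ropp.
  set (eA := exp (binom_exponent (INR a) (INR j))) in *.
  set (eB := exp (binom_exponent (INR d) (INR j'))) in *.
  assert (0 < eA) by apply exp_pos. assert (0 < eB) by apply exp_pos.
  apply Rle_div_l; [lra |]. apply Rle_trans with (1 := Hup).
  replace (INR (S d) * (eA * / eB) * C d j') with (eA * (INR (S d) * C d j' / eB)) by (field; lra).
  rewrite <- (Rmult_1_r eA) at 1. apply Rmult_le_compat_l; [lra |].
  apply Rle_div_r; lra.
Qed.

Lemma nfloor_spec (r : R) : 0 <= r -> INR (Defs.nfloor r) <= r < INR (Defs.nfloor r) + 1.
Proof.
  intros Hr. unfold Defs.nfloor. destruct (base_Int_part r) as [Hlo Hhi].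
  assert (Hnonneg : (0 <= Int_part r)%Z).
  { assert (Hgt : (-1 < Int_part r)%Z) by (apply lt_IZR; lra). lia. }
  rewrite INR_IZR_INZ, Z2Nat.id by exact Hnonneg. lra.
Qed.

Lemma nfloor_le (r t : R) : 0 <= r <= t -> (Defs.nfloor r <= Defs.nfloor t)%nat.
Proof.
  intros Hrt. pose proof (nfloor_spec r ltac:(lra)). pose proof (nfloor_spec t ltac:(lra)).
  apply Nat.lt_succ_r, INR_lt. rewrite S_INR. lra.
Qed.

Lemma Rabs_nfloor_sub (r : R) : 0 <= r -> Rabs (INR (Defs.nfloor r) - r) <= 1.
Proof. intros Hr. pose proof (nfloor_spec r Hr). apply Rabs_le. lra. Qed.

Lemma binomn_ratio_le (u v t w : R) (n : nat) : 1 <= INR n ->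
  0 <= v <= u -> u <= 1 -> 0 <= w <= t -> t <= 1 ->
  binomn u v n / binomn t w n <=
  (INR n + 1) * exp (INR n * (binom_exponent u v - binom_exponent t w) + 2 * (4 * ln (INR n) + 7)).
Proof.
  intros Hn Huv Hu1 Htw Ht1. unfold binomn.
  set (nr := INR n) in *.
  assert (Hfloor : forall r, 0 <= r -> r <= 1 ->
    0 <= INR (Defs.nfloor (r * nr)) <= nr /\ Rabs (INR (Defs.nfloor (r * nr)) - nr * r) <= 1).
  { intros r Hr0 Hr1. rewrite (Rmult_comm nr r). pose proof (nfloor_spec (r * nr) ltac:(nra)).
    split; [split; [apply pos_INR | nra] | apply Rabs_nfloor_sub; nra]. }
  destruct (Hfloor u ltac:(lra) Hu1) as [Ha Ea].
  destruct (Hfloor v ltac:(lra) ltac:(lra)) as [Hj Ej].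
  destruct (Hfloor t ltac:(lra) Ht1) as [Hd Ed].
  destruct (Hfloor w ltac:(lra) ltac:(lra)) as [Hj' Ej'].
  assert (Hja : (Defs.nfloor (v * nr) <= Defs.nfloor (u * nr))%nat) by (apply nfloor_le; nra).
  assert (Hjd : (Defs.nfloor (w * nr) <= Defs.nfloor (t * nr))%nat) by (apply nfloor_le; nra).
  pose proof (le_INR _ _ Hja). pose proof (le_INR _ _ Hjd).
  pose proof (binom_exponent_approx nr (INR (Defs.nfloor (u * nr))) (INR (Defs.nfloor (v * nr))) u v
    Hn Huv Hu1 ltac:(lra) ltac:(lra) Ea Ej) as Bu.
  pose proof (binom_exponent_approx nr (INR (Defs.nfloor (t * nr))) (INR (Defs.nfloor (w * nr))) t w
    Hn Htw Ht1 ltac:(lra) ltac:(lra) Ed Ej') as Bt.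
  apply Rabs_le_between in Bu, Bt.
  apply Rle_trans with (1 := C_ratio_le _ _ _ _ Hja Hjd).
  apply Rmult_le_compat; [apply pos_INR | left; apply exp_pos | rewrite S_INR; lra |].
  apply exp_le_compat. lra.
Qed.

Lemma mvt_between (f f' : R -> R) (a b x y : R) :
  (forall s, a <= s <= b -> is_derive f s (f' s)) -> a <= x <= b -> a <= y <= b ->
  exists c, Rmin y x <= c <= Rmax y x /\ f x - f y = f' c * (x - y).
Proof.
  intros Hd Hx Hy. apply MVT_gen.
  - intros c Hc. apply Hd. unfold Rmin, Rmax in Hc. destruct (Rle_dec y x); lra.
  - intros c Hc. apply derivable_continuous_pt. exists (f' c). apply is_derive_Reals, Hd.
    unfold Rmin, Rmax in Hc. destruct (Rle_dec y x); lra.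
Qed.

Lemma concave_le_critical (f f' f'' : R -> R) (a b m : R) :
  (forall s, a <= s <= b -> is_derive f s (f' s)) ->
  (forall s, a <= s <= b -> is_derive f' s (f'' s)) ->
  (forall s, a <= s <= b -> f'' s <= 0) ->
  a <= m <= b -> f' m = 0 -> forall s, a <= s <= b -> f s <= f m.
Proof.
  intros Hf Hf' Hneg Hm Hcrit s Hs.
  destruct (mvt_between f f' a b s m Hf Hs Hm) as (c & Hc & Ec).
  assert (Hc' : a <= c <= b) by (unfold Rmin, Rmax in Hc; destruct (Rle_dec m s); lra).
  destruct (mvt_between f' f'' a b c m Hf' Hc' Hm) as (e & He & Ee).
  assert (He' : a <= e <= b) by (unfold Rmin, Rmax in He; destruct (Rle_dec m c); lra).
  pose proof (Hneg e He').
  (* [f s - f m = f'' e * (c - m) * (s - m)] with [c] between [m] and [s] *)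
  assert (0 <= (c - m) * (s - m)) by (unfold Rmin, Rmax in Hc; destruct (Rle_dec m s); nra).
  rewrite Hcrit in Ee. nra.
Qed.

Lemma log2_3_2_bounds : 1/2 <= log2 (3/2) <= 2/3.
Proof.
  unfold log2. pose proof ln_lt_2.
  assert (H94 : ln (9/4) = 2 * ln (3/2)).
  { replace (9/4) with (3/2 * (3/2)) by lra. rewrite ln_mult; lra. }
  assert (H278 : ln (27/8) = 3 * ln (3/2)).
  { replace (27/8) with (3/2 * (3/2) * (3/2)) by lra. rewrite !ln_mult; lra. }
  assert (H4 : ln 4 = 2 * ln 2).
  { replace 4 with (2 * 2) by lra. rewrite ln_mult; lra. }
  assert (ln 2 <= ln (9/4)) by (apply ln_le; lra).
  assert (ln (27/8) <= ln 4) by (apply ln_le; lra).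
  assert (Hk : ln (3/2) / ln 2 * ln 2 = ln (3/2)) by (field; lra).
  split; nra.
Qed.

(* The slope [log2 (3/2)] is what makes [rate] stationary at [1/2]. *)
Definition y_opt (s : R) : R := 1/4 + log2 (3/2) / 2 * (s - 1/2).

Lemma y_opt_range (s : R) : 0 <= s <= 1 -> 1/12 <= y_opt s <= 5/12.
Proof.
  intros Hs. pose proof log2_3_2_bounds. unfold y_opt.
  split; destruct (Rle_dec s (1/2)); nra.
Qed.

Definition rate (s : R) : R :=
  xlnx ((1 + s) / 2) - xlnx (y_opt s + s / 2) + xlnx (y_opt s) - xlnx (1/2).

Definition rate_deriv (s : R) : R :=
  1/2 * ln ((1 + s) / 2) - (1 + log2 (3/2)) / 2 * ln (y_opt s + s / 2)
  + log2 (3/2) / 2 * ln (y_opt s).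

Definition rate_deriv2 (s : R) : R :=
  1 / (2 * (1 + s)) - (1 + log2 (3/2)) ^ 2 / (4 * (y_opt s + s / 2))
  + log2 (3/2) ^ 2 / (4 * y_opt s).

Lemma rate_binom_exponent (s : R) :
  rate s = binom_exponent (1 - (1 - s) / 2) (s / 2 + y_opt s) - binom_exponent (1/2) (y_opt s).
Proof.
  unfold rate, binom_exponent.
  replace (1 - (1 - s) / 2) with ((1 + s) / 2) by field.
  replace (s / 2 + y_opt s) with (y_opt s + s / 2) by ring.
  replace ((1 + s) / 2 - (y_opt s + s / 2)) with (1/2 - y_opt s) by field.
  ring.
Qed.

Lemma rate_flip (s : R) :
  rate (1 - s) = binom_exponent (1 - s / 2) (y_opt s) - binom_exponent (1/2) (y_opt s).
Proof.
  unfold rate, binom_exponent.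
  replace (y_opt (1 - s)) with (1/2 - y_opt s) by (unfold y_opt; field).
  replace ((1 + (1 - s)) / 2) with (1 - s / 2) by field.
  replace (1/2 - y_opt s + (1 - s) / 2) with (1 - s / 2 - y_opt s) by field.
  replace (1/2 - (1/2 - y_opt s)) with (y_opt s) by ring.
  ring.
Qed.

Lemma is_derive_rate (s : R) : 0 <= s <= 1 -> is_derive rate s (rate_deriv s).
Proof.
  intros Hs. pose proof (y_opt_range s Hs).
  unfold rate, rate_deriv, xlnx. unfold y_opt in *.
  auto_derive; [repeat split; lra |].
  unfold Rminus, Rdiv in *. field. repeat split; lra.
Qed.

Lemma is_derive_rate_deriv (s : R) : 0 <= s <= 1 -> is_derive rate_deriv s (rate_deriv2 s).
Proof.
  intros Hs. pose proof (y_opt_range s Hs).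
  unfold rate_deriv, rate_deriv2. unfold y_opt in *.
  auto_derive; [repeat split; lra |].
  unfold Rminus, Rdiv in *. field. repeat split; lra.
Qed.

Lemma rate_deriv2_nonpos (s : R) : 0 <= s <= 1 -> rate_deriv2 s <= 0.
Proof.
  intros Hs. pose proof log2_3_2_bounds. pose proof (y_opt_range s Hs).
  unfold rate_deriv2. set (k := log2 (3/2)) in *.
  assert (Hy : y_opt s = 1/4 + k / 2 * (s - 1/2)) by reflexivity.
  set (y := y_opt s) in *.
  assert (Hnum : 2 * y * (y + s/2) - (1 + k)^2 * (1 + s) * y + k^2 * (1 + s) * (y + s/2) <= 0)
    by (rewrite Hy; nra).
  replace (1 / (2 * (1 + s)) - (1 + k) ^ 2 / (4 * (y + s / 2)) + k ^ 2 / (4 * y))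
    with ((2 * y * (y + s/2) - (1 + k)^2 * (1 + s) * y + k^2 * (1 + s) * (y + s/2))
          / (4 * (1 + s) * (y + s/2) * y)) by (field; repeat split; lra).
  apply Rmult_le_0_r; [lra |]. left. apply Rinv_0_lt_compat.
  apply Rmult_lt_0_compat; [apply Rmult_lt_0_compat |]; lra.
Qed.

Lemma ln_fraction_values : ln (1/2) = - ln 2 /\ ln (1/4) = - 2 * ln 2 /\ ln (3/4) = ln 3 - 2 * ln 2
  /\ ln (3/2) = ln 3 - ln 2.
Proof.
  assert (H2 : ln (/ 2) = - ln 2) by (apply ln_Rinv; lra).
  assert (H4 : ln (/ 4) = - 2 * ln 2).
  { replace (/ 4) with (/ 2 * / 2) by lra. rewrite ln_mult, H2; lra. }
  repeat split.
  - replace (1/2) with (/ 2) by lra. exact H2.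
  - replace (1/4) with (/ 4) by lra. exact H4.
  - replace (3/4) with (3 * / 4) by lra. rewrite ln_mult, H4; lra.
  - replace (3/2) with (3 * / 2) by lra. rewrite ln_mult, H2; lra.
Qed.

Lemma rate_deriv_half : rate_deriv (1/2) = 0.
Proof.
  unfold rate_deriv, y_opt, log2.
  replace ((1 + 1/2) / 2) with (3/4) by lra.
  replace (1/4 + ln (3/2) / ln 2 / 2 * (1/2 - 1/2) + 1/2 / 2) with (1/2) by lra.
  replace (1/4 + ln (3/2) / ln 2 / 2 * (1/2 - 1/2)) with (1/4) by lra.
  destruct ln_fraction_values as (E2 & E4 & E34 & E32).
  rewrite E2, E4, E34, E32. pose proof ln_lt_2. field. lra.
Qed.

Lemma rate_half : rate (1/2) = (1 - h (1/4)) * ln 2.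
Proof.
  unfold rate, y_opt, h, log2, xlnx.
  destruct (Req_EM_T (1/4) 0); [lra |]. destruct (Req_EM_T (1/4) 1); [lra |].
  replace ((1 + 1/2) / 2) with (3/4) by lra. replace (1 - 1/4) with (3/4) by lra.
  replace (1/4 + ln (3/2) / ln 2 / 2 * (1/2 - 1/2) + 1/2 / 2) with (1/2) by lra.
  replace (1/4 + ln (3/2) / ln 2 / 2 * (1/2 - 1/2)) with (1/4) by lra.
  destruct ln_fraction_values as (E2 & E4 & E34 & _).
  rewrite E2, E4, E34. pose proof ln_lt_2. field. lra.
Qed.

Lemma rate_le (s : R) : 0 <= s <= 1 -> rate s <= (1 - h (1/4)) * ln 2.
Proof.
  intros Hs. rewrite <- rate_half.
  apply (concave_le_critical rate rate_deriv rate_deriv2 0 1); try lra.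
  - exact is_derive_rate.
  - exact is_derive_rate_deriv.
  - exact rate_deriv2_nonpos.
  - exact rate_deriv_half.
Qed.

Lemma ln_ge_2 (r : R) : 9 <= r -> 2 <= ln r.
Proof.
  intros Hr. rewrite <- (ln_exp 2). apply ln_le; [apply exp_pos |].
  replace 2 with (1 + 1) by lra. rewrite exp_plus.
  pose proof exp_le_3. pose proof (exp_pos 1). nra.
Qed.

Lemma poly_exp_factor_le (r K : R) : 9 <= r ->
  2 * ((r + 1) * exp (r * K + 2 * (4 * ln r + 7))) <= exp (r * K) * exp (17 * ln r).
Proof.
  intros Hr. assert (Hln : 2 <= ln r) by (apply ln_ge_2; lra).
  (* [2 (r + 1) <= r^2] and [e^14 <= r^7] *)
  assert (Hsq : 2 * (r + 1) <= exp (ln r + ln r)) by (rewrite exp_plus, exp_ln by lra; nra).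
  apply Rle_trans with (exp (ln r + ln r) * exp (r * K + 2 * (4 * ln r + 7))).
  - rewrite <- Rmult_assoc. apply Rmult_le_compat_r; [left; apply exp_pos | lra].
  - rewrite <- !exp_plus. apply exp_le_compat. lra.
Qed.

Lemma witness_ratio_le (n : nat) (s : R) : (9 <= n)%nat -> 0 <= s <= 1 ->
  (binomn (1 - s / 2) (s / 2 + y_opt s - s / 2) n + binomn (1 - (1 - s) / 2) (s / 2 + y_opt s) n)
    / binomn (1 / 2) (s / 2 + y_opt s - s / 2) n
  <= Rpower 2 (INR n * (1 - h (1 / 4))) * Rpower (INR n) 17.
Proof.
  intros Hn Hs. pose proof (y_opt_range s Hs) as Hy.
  replace (s / 2 + y_opt s - s / 2) with (y_opt s) by ring.
  assert (Hnr : 9 <= INR n) by (apply le_INR in Hn; simpl in Hn; lra).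
  pose proof (binomn_ratio_le (1 - s / 2) (y_opt s) (1/2) (y_opt s) n ltac:(lra)
    ltac:(lra) ltac:(lra) ltac:(lra) ltac:(lra)) as B1.
  pose proof (binomn_ratio_le (1 - (1 - s) / 2) (s / 2 + y_opt s) (1/2) (y_opt s) n ltac:(lra)
    ltac:(lra) ltac:(lra) ltac:(lra) ltac:(lra)) as B2.
  set (nr := INR n) in *. set (K := (1 - h (1/4)) * ln 2).
  assert (Hflip : nr * rate (1 - s) <= nr * K) by (apply Rmult_le_compat_l, rate_le; lra).
  assert (Hrate : nr * rate s <= nr * K) by (apply Rmult_le_compat_l, rate_le; lra).
  rewrite rate_flip in Hflip. rewrite rate_binom_exponent in Hrate.
  assert (Hexp : forall z, z <= nr * K ->
    (nr + 1) * exp (z + 2 * (4 * ln nr + 7)) <= (nr + 1) * exp (nr * K + 2 * (4 * ln nr + 7))).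
  { intros z Hz. apply Rmult_le_compat_l; [lra |]. apply exp_le_compat. lra. }
  pose proof (Hexp _ Hflip). pose proof (Hexp _ Hrate).
  unfold Rpower. replace (nr * (1 - h (1/4)) * ln 2) with (nr * K) by (unfold K; ring).
  rewrite Rdiv_plus_distr. apply Rle_trans with (2 := poly_exp_factor_le nr K Hnr). lra.
Qed.

Theorem mainTheorem13 :
  exists c : R, 0 < c /\
  exists N : nat, forall n : nat, (N <= n)%nat ->
  forall sigma : R, 0 <= sigma <= 1 ->
  exists x : R,
    0 <= x - sigma / 2 <= 1 / 2 /\
    0 <= x <= 1 - (1 - sigma) / 2 /\
    (binomn (1 - sigma / 2) (x - sigma / 2) n + binomn (1 - (1 - sigma) / 2) x n)
      / binomn (1 / 2) (x - sigma / 2) n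
    <= Rpower 2 (INR n * (1 - h (1 / 4))) * Rpower (INR n) c.
Proof.
  exists 17. split; [lra |]. exists 9%nat. intros n Hn sigma Hsigma.
  exists (sigma / 2 + y_opt sigma). pose proof (y_opt_range sigma Hsigma).
  split; [lra | split; [lra |]].
  apply witness_ratio_le; assumption.
Qed.
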